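(* Let $A\in\mathbb{R}^{n\times n}$, $B\in\mathbb{R}^{n\times m}$, horizon $N\ge1$, $\theta\in(0,1)$. For $t\in\{1,\dots,N\}$ let $\mathcal{X}_t=\{x\in\mathbb{R}^n\mid (x-p_t)^\top P_t(x-p_t)\le1\}$ and let $\mathcal{U}=\{u\in\mathbb{R}^m\mid u^\top Qu\le1\}$, with $p_t\in\mathbb{R}^n$ and $P_t$, $Q$ symmetric positive definite. Let $Y\in\mathbb{R}^{n\times n}$ be symmetric positive definite and $\mathcal{W}=\{w\mid w^\top Yw\le1\}$, and let $w^{(0)}(0),\dots,w^{(0)}(N-1)$ be a random disturbance sequence such that $\Pr\{w^{(0)}(t)\in\mathcal{W}\ \forall t\in\{0,\dots,N-1\}\}\ge1-\theta$. Let $(\hat\Phi^*,\Psi^*,\lambda_0^*,\lambda_1^* )$ be a feasible solution of the program: minimize $\operatorname{trace}\hat\Phi$ over symmetric $\hat\Phi\succ0$, $\Psi\in\mathbb{R}^{m\times n}$, $\lambda_0,\lambda_1\in\mathbb{R}$ subject to $\lambda_0\ge0$, $\lambda_1\ge0$, $1-\lambda_0-\lambda_1\ge0$; $\begin{bmatrix}\hat\Phi-\frac{1}{\lambda_1}Y^{-1} & A\hat\Phi+B\Psi\\ (A\hat\Phi+B\Psi)^\top & \lambda_0\hat\Phi\end{bmatrix}\succeq0$; $\begin{bmatrix}\hat\Phi & \Psi^\top Q^{1/2}\\ Q^{1/2}\Psi & I\end{bmatrix}\succ0$; $\hat\Phi\prec P_t^{-1}$ for all $t\in\{1,\dots,N\}$.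 Define $\Phi=(\hat\Phi^* )^{-1}$, $K=\Psi^*\Phi$, $\mathcal{E}=\{e\mid e^\top\Phi e\le1\}$, $\mathcal{E}_u=\{Ke\mid e\in\mathcal{E}\}$, and let $e^{(0)}$ be the trajectory of the error system $e^{(0)}(t+1)=(A+BK)e^{(0)}(t)+w^{(0)}(t)$, $e^{(0)}(0)=0$. Then: (i) $\Pr\{e^{(0)}(t)\in\mathcal{E}\ \forall t\in\{1,\dots,N\}\}\ge1-\theta$; (ii) $\mathrm{int}(\mathcal{X}_t\ominus\mathcal{E})\ne\emptyset$ for all $t\in\{1,\dots,N\}$; (iii) $\mathrm{int}(\mathcal{U}\ominus\mathcal{E}_u)\ne\emptyset$.
   Context: $Q^{1/2}$ denotes the symmetric positive definite square root of $Q$; $\succ,\succeq$ denote the Loewner order. The Pontryagin difference is $S_1\ominus S_2=\{s_1\mid s_1+s_2\in S_1\ \forall s_2\in S_2\}$ and $\mathrm{int}$ denotes the interior of a set. *)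

From HB Require Import structures.
From mathcomp Require Import all_boot all_order all_algebra.
From mathcomp Require Import all_classical all_reals all_analysis.
Set Implicit Arguments. Unset Strict Implicit. Unset Printing Implicit Defensive.
Import Order.TTheory GRing.Theory Num.Theory.
Import numFieldNormedType.Exports.
Local Open Scope classical_set_scope.
Local Open Scope ring_scope.

Definition qf (R : realType) (n : nat) (M : 'M[R]_n) (x : 'cV[R]_n) : R :=
  (x^T *m M *m x) 0 0.

Definition psd (R : realType) (n : nat) (M : 'M[R]_n) : Prop :=
  M^T = M /\ forall x : 'cV[R]_n, 0 <= qf M x.

Definition pd (R : realType) (n : nat) (M : 'M[R]_n) : Prop :=
  M^T = M /\ forall x : 'cV[R]_n, x != 0 -> 0 < qf M x.

Definition ellipsoid (R : realType) (n : nat) (M : 'M[R]_n) (c : 'cV[R]_n)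
  : set 'cV[R]_n := [set x | qf M (x - c) <= 1].

Definition pdiff (R : realType) (n : nat) (S1 S2 : set 'cV[R]_n) : set 'cV[R]_n :=
  [set s1 | forall s2, S2 s2 -> S1 (s1 + s2)].

Fixpoint err_traj (R : realType) (n : nat) (F : 'M[R]_n) (w : nat -> 'cV[R]_n)
  (t : nat) : 'cV[R]_n :=
  match t with
  | 0 => 0
  | t'.+1 => F *m err_traj F w t' + w t'
  end.

From HB Require Import structures.
From mathcomp Require Import all_boot all_order all_algebra.
From mathcomp Require Import all_classical all_reals all_analysis.
From mathcomp Require Import ring lra measurable_realfun.
Set Implicit Arguments.
Unset Strict Implicit.
Unset Printing Implicit Defensive.
Import Order.TTheory GRing.Theory Num.Theory.
Import numFieldNormedType.Exports.
Local Open Scope classical_set_scope.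
Local Open Scope ring_scope.

(** The LMI, evaluated at the pair (Φ z, -S Φ e) with z = (A + BK) e + w the
    successor state and S = zᵀ Φ z, and combined with Young's inequality for
    the disturbance term and the multipliers λ0, λ1, gives S² ≤ S.  Hence E is
    invariant under disturbances in W, every trajectory whose disturbances stay
    in W stays in E, and the probability bound carries over.  For (ii) and
    (iii), the strict LMIs hold with a positive margin, because a positive
    definite form is bounded below on the compact unit sphere; so E, resp. K E,
    lies in a sublevel set {qf ≤ 1 - η} strictly inside X_t, resp. U, and a
    small ball around the centre of X_t, resp. U, lies in the Pontryagin
    difference. *)

Section BilinearForm.
Variable R : comNzRingType.

Definition bilin {k l : nat} (M : 'M[R]_(k, l)) (x : 'cV[R]_k) (y : 'cV[R]_l) : R :=
  (x^T *m M *m y) 0 0.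

Variables k l : nat.
Implicit Types (M : 'M[R]_(k, l)) (x : 'cV[R]_k) (y : 'cV[R]_l).

Lemma bilinDl M x1 x2 y : bilin M (x1 + x2) y = bilin M x1 y + bilin M x2 y.
Proof. by rewrite /bilin linearD /= !mulmxDl mxE. Qed.

Lemma bilinDr M x y1 y2 : bilin M x (y1 + y2) = bilin M x y1 + bilin M x y2.
Proof. by rewrite /bilin mulmxDr mxE. Qed.

Lemma bilinZl M a x y : bilin M (a *: x) y = a * bilin M x y.
Proof. by rewrite /bilin linearZ /= -!scalemxAl mxE. Qed.

Lemma bilinZr M a x y : bilin M x (a *: y) = a * bilin M x y.
Proof. by rewrite /bilin -!scalemxAr mxE. Qed.

Lemma bilinNl M x y : bilin M (- x) y = - bilin M x y.
Proof. by rewrite -scaleN1r bilinZl mulN1r. Qed.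

Lemma bilinNr M x y : bilin M x (- y) = - bilin M x y.
Proof. by rewrite -scaleN1r bilinZr mulN1r. Qed.

Lemma bilinDm M N x y : bilin (M + N) x y = bilin M x y + bilin N x y.
Proof. by rewrite /bilin mulmxDr mulmxDl mxE. Qed.

Lemma bilinZm a M x y : bilin (a *: M) x y = a * bilin M x y.
Proof. by rewrite /bilin -scalemxAr -scalemxAl mxE. Qed.

Lemma bilinNm M x y : bilin (- M) x y = - bilin M x y.
Proof. by rewrite -scaleN1r bilinZm mulN1r. Qed.

Lemma bilin0m x y : bilin 0 x y = 0.
Proof. by rewrite /bilin mulmx0 mul0mx mxE. Qed.

Lemma bilin_tr M x y : bilin M x y = bilin M^T y x.
Proof.
rewrite /bilin; transitivity ((x^T *m M *m y)^T 0 0); first by rewrite [RHS]mxE.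
by rewrite !trmx_mul trmxK mulmxA.
Qed.

Lemma bilinMl p (N : 'M[R]_(k, p)) M (x : 'cV[R]_p) y :
  bilin M (N *m x) y = bilin (N^T *m M) x y.
Proof. by rewrite /bilin trmx_mul !mulmxA. Qed.

Lemma bilinMr p M (N : 'M[R]_(l, p)) x (y : 'cV[R]_p) :
  bilin M x (N *m y) = bilin (M *m N) x y.
Proof. by rewrite /bilin !mulmxA. Qed.

Lemma bilin_sum M x y : bilin M x y = \sum_i \sum_j x i 0 * M i j * y j 0.
Proof.
rewrite /bilin mxE exchange_big; apply: eq_bigr => j _.
by rewrite mxE mulr_suml; apply: eq_bigr => i _; rewrite mxE.
Qed.

End BilinearForm.

Section QuadraticForm.
Variables (R : realType) (k : nat).
Implicit Types (M : 'M[R]_k) (x y : 'cV[R]_k).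

Lemma qfE M x : qf M x = bilin M x x. Proof. by []. Qed.

Lemma qf0 M : qf M 0 = 0.
Proof. by rewrite /qf mulmx0 mxE. Qed.

Lemma qfZ M a x : qf M (a *: x) = a ^+ 2 * qf M x.
Proof. by rewrite qfE bilinZl bilinZr mulrA -expr2. Qed.

Lemma qfN M x : qf M (- x) = qf M x.
Proof. by rewrite -scaleN1r qfZ sqrrN expr1n mul1r. Qed.

Lemma qfD M x y : M^T = M -> qf M (x + y) = qf M x + 2 * bilin M x y + qf M y.
Proof.
move=> sM; rewrite !qfE bilinDl !bilinDr [bilin M y x]bilin_tr sM.
by rewrite mulr2n mulrDl mul1r !addrA.
Qed.

Lemma qf1E x : qf 1%:M x = \sum_i x i 0 ^+ 2.
Proof.
by rewrite /qf mulmx1 mxE; apply: eq_bigr => i _; rewrite mxE expr2.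
Qed.

Lemma qf1_ge0 x : 0 <= qf 1%:M x.
Proof. by rewrite qf1E sumr_ge0 // => i _; rewrite sqr_ge0. Qed.

Lemma qf1_gt0 x : x != 0 -> 0 < qf 1%:M x.
Proof.
move=> x0; rewrite lt_def qf1_ge0 andbT; apply: contra x0 => /eqP.
rewrite qf1E => /psumr_eq0P x2_eq0; apply/eqP/matrixP => i j.
rewrite (ord1 j) mxE; apply/eqP; rewrite -sqrf_eq0 x2_eq0 // => *.
exact: sqr_ge0.
Qed.

Lemma psd1 : psd (1%:M : 'M[R]_k).
Proof. by split; [exact: trmx1 | exact: qf1_ge0]. Qed.

Lemma pd_psd M : pd M -> psd M.
Proof.
case=> sM pM; split=> // x; have [->|/pM/ltW//] := eqVneq x 0.
by rewrite qf0.
Qed.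

Lemma psd_young M x y s : psd M ->
  2 * s * bilin M x y <= qf M x + s ^+ 2 * qf M y.
Proof.
case=> sM pM; have := pM (x + (- s) *: y).
by rewrite qfD // qfZ bilinZr sqrrN; nra.
Qed.

Lemma pd_unit M : pd M -> M \in unitmx.
Proof.
case=> sM pM; rewrite unitmxE unitfE; apply/negP => /det0P [v v0 vM].
have /pM : v^T != 0 by rewrite -trmx0 (inj_eq (@trmx_inj _ _ _)).
by rewrite /qf trmxK vM !mul0mx mxE ltxx.
Qed.

Lemma bilin_invmx M x y : M^T = M -> M \in unitmx ->
  bilin M (invmx M *m x) (invmx M *m y) = bilin (invmx M) x y.
Proof.
by move=> sM uM; rewrite bilinMl bilinMr trmx_inv sM mulVmx // mul1mx.
Qed.

Lemma qf_invmx M x : pd M -> qf M (invmx M *m x) = qf (invmx M) x.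
Proof. by move=> pM; rewrite !qfE bilin_invmx ?pd_unit //; case: pM. Qed.

Lemma pd_inv M : pd M -> pd (invmx M).
Proof.
move=> pM; have uM := pd_unit pM; split; first by rewrite trmx_inv pM.1.
move=> x x0; rewrite -qf_invmx //; apply: pM.2.
by apply: contra x0 => /eqP Mx0; rewrite -(mulKVmx uM x) Mx0 mulmx0.
Qed.

Lemma pd_young_inv M u w s : pd M ->
  2 * s * bilin 1%:M u w <= qf (invmx M) u + s ^+ 2 * qf M w.
Proof.
move=> pM; have := psd_young (invmx M *m u) w s (pd_psd pM).
by rewrite qf_invmx // bilinMl trmx_inv pM.1 mulVmx ?pd_unit.
Qed.

Lemma qf_block l (A : 'M[R]_k) (B : 'M[R]_(k, l)) (C : 'M[R]_(l, k)) (D : 'M[R]_l)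
    x (y : 'cV[R]_l) :
  qf (block_mx A B C D) (col_mx x y) = qf A x + bilin B x y + bilin C y x + qf D y.
Proof.
rewrite /qf /bilin tr_col_mx mul_row_block mul_row_col !mulmxDl !mxE.
by rewrite addrA; congr (_ + _); rewrite -addrA [X in _ + X]addrC addrA.
Qed.

End QuadraticForm.

Section Topology.
Variable R : realType.

Lemma continuous_qf_comp (T : topologicalType) k (M : 'M[R]_k) (g : T -> 'cV[R]_k) :
  (forall i, continuous (fun t => g t i 0)) -> continuous (fun t => qf M (g t)).
Proof.
move=> cg; under eq_fun do rewrite qfE bilin_sum.
apply: continuous_big => [|i _]; first exact: add_continuous.
apply: continuous_big => [|j _ t]; first exact: add_continuous.
apply: (continuousM (s := fun x => g x i 0 * M i j)); last exact: cg.
by apply: (continuousM (s := fun x => g x i 0)); [exact: cg | exact: cst_continuous].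
Qed.

Lemma continuous_qf_row k (M : 'M[R]_k) : continuous (fun v : 'rV[R]_k => qf M v^T).
Proof.
by apply: continuous_qf_comp => i; under eq_fun do rewrite mxE; exact: coord_continuous.
Qed.

Lemma unit_sphere_compact k : compact [set v : 'rV[R]_k | qf 1%:M v^T = 1].
Proof.
apply: bounded_closed_compact.
  exists 1; split=> [|r r1 v /= v1]; first exact: num_real.
  rewrite [leLHS]/Num.norm /= mx_normrE; apply: bigmax_le => [|[i j] _ /=].
    exact: le_trans (ltW r1).
  apply: le_trans (ltW r1); rewrite (ord1 i) -(expr_le1 (isT : 0 < 2)%N) //.
  rewrite real_normK ?num_real // -v1 qf1E (bigD1 j) //= mxE lerDl.
  by rewrite sumr_ge0 // => *; rewrite sqr_ge0.
exact: (continuous_closedP _).1 (continuous_qf_row (M := 1%:M)) _ (@closed_eq R 1).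
Qed.

Lemma pd_coercive k (D : 'M[R]_k) : pd D ->
  exists2 mu, 0 < mu & forall x, mu * qf 1%:M x <= qf D x.
Proof.
move=> pD; pose S := [set v : 'rV[R]_k | qf 1%:M v^T = 1].
have normalize x : x != 0 -> exists2 v, S v & qf D x = qf 1%:M x * qf D v^T.
  move=> x0; have x2_gt0 := qf1_gt0 x0.
  exists ((Num.sqrt (qf 1%:M x))^-1 *: x^T); rewrite /S /= linearZ /= trmxK !qfZ.
    by rewrite exprVn sqr_sqrtr ?ltW // mulVf ?gt_eqF.
  by rewrite exprVn sqr_sqrtr ?ltW // mulrA mulfV ?gt_eqF ?mul1r.
have [[v0 Sv0]|S0] := pselect (S !=set0); last first.
  exists 1 => // x; have [->|/normalize[v Sv _]] := eqVneq x 0.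
    by rewrite !qf0 mulr0.
  by case: S0; exists v.
have [c /set_mem Sc cmin] := compact_EVT_min (ex_intro _ v0 Sv0)
  (@unit_sphere_compact k) (continuous_subspaceT (continuous_qf_row (M := D))).
exists (qf D c^T).
  apply: pD.2; apply: contra_eq_neq Sc => ->.
  by rewrite qf0 eq_sym oner_neq0.
move=> x; have [->|/normalize[v Sv ->]] := eqVneq x 0; first by rewrite !qf0 mulr0.
by rewrite mulrC ler_wpM2l ?qf1_ge0 // cmin // inE.
Qed.

Lemma qf_add_le1 k (M : 'M[R]_k) (eta : R) d a : psd M -> 0 < eta ->
  (1 + eta) * qf M d <= eta ^+ 3 -> qf M a <= 1 - eta -> qf M (d + a) <= 1.
Proof.
move=> pM eta0 hd ha; rewrite qfD ?pM.1 // -(ler_pM2l eta0) mulr1.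
have young := psd_young d a eta pM.
have ha' : eta * (1 + eta) * qf M a <= eta * (1 + eta) * (1 - eta).
  by rewrite ler_wpM2l // mulr_ge0 //; lra.
have qd0 := pM.2 d.
nra.
Qed.

Lemma interior_pdiff_ellipsoid k (M : 'M[R]_k) c (S : set 'cV[R]_k) (eta : R) :
  psd M -> 0 < eta -> (forall a, S a -> qf M a <= 1 - eta) ->
  interior (pdiff (ellipsoid M c) S) c.
Proof.
move=> pM eta0 hS.
have cont_qf : continuous (fun y : 'cV[R]_k => qf M (y - c)).
  apply: continuous_qf_comp => i; under eq_fun do rewrite !mxE.
  move=> y; apply: (@cvgB _ _ _ (nbhs y)); [exact: coord_continuous | exact: cvg_cst].
have delta0 : 0 < eta ^+ 3 / (1 + eta) by rewrite divr_gt0 ?exprn_gt0 //; lra.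
have : \forall y \near c, qf M (y - c) < eta ^+ 3 / (1 + eta).
  by apply: (cvgr_lt _ (cont_qf c)); rewrite subrr qf0.
apply: filterS => y hy a Sa; rewrite /ellipsoid /= addrAC.
apply: (qf_add_le1 (eta := eta)) => //; last exact: hS.
by rewrite mulrC -ler_pdivlMr ?ltW //; lra.
Qed.

End Topology.

Lemma err_traj_stays (R : realType) n (F : 'M[R]_n) (w : nat -> 'cV[R]_n)
    (S W : set 'cV[R]_n) N :
  S 0 -> (forall x v, S x -> W v -> S (F *m x + v)) ->
  (forall t, (t < N)%N -> W (w t)) ->
  forall t, (t <= N)%N -> S (err_traj F w t).
Proof.
move=> S0 S_inv Ww; elim=> [//|t IHt] tN.
by apply: S_inv; [exact: IHt (ltnW tN) | exact: Ww].
Qed.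

Section EllipsoidalTube.
Variable R : realType.

Lemma ler_one_sub_frac (x kap : R) : 0 < kap -> x * (1 + kap) <= 1 ->
  x <= 1 - kap / (1 + kap).
Proof.
move=> kap0; have kap1 : 0 < 1 + kap by lra.
have -> : 1 - kap / (1 + kap) = 1 / (1 + kap) by field; rewrite gt_eqF.
by rewrite ler_pdivlMr.
Qed.

Lemma ellipsoid_invariant n m (A : 'M[R]_n) (B : 'M[R]_(n, m)) (Y H : 'M[R]_n)
    (Psi : 'M[R]_(m, n)) (lam0 lam1 : R) e w :
  pd Y -> pd H -> 0 <= lam0 -> 0 < lam1 -> lam0 + lam1 <= 1 ->
  psd (block_mx (H - lam1^-1 *: invmx Y) (A *m H + B *m Psi)
                ((A *m H + B *m Psi)^T) (lam0 *: H)) ->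
  qf (invmx H) e <= 1 -> qf Y w <= 1 ->
  qf (invmx H) ((A + B *m (Psi *m invmx H)) *m e + w) <= 1.
Proof.
move=> pY pH lam0_ge0 lam1_gt0 lam01 [_ lmi] he hw.
have uH := pd_unit pH; have sPhi := (pd_inv pH).1.
set Phi := invmx H in he sPhi *; set F := A + B *m (Psi *m Phi).
set u := Phi *m (F *m e + w); set S := qf Phi (F *m e + w).
set a := bilin 1%:M u (F *m e); set b := bilin 1%:M u w.
have Sab : S = a + b by rewrite /a /b -bilinDr bilinMl mulmx1 sPhi.
set G := A *m H + B *m Psi in lmi *.
have GPhi : G *m Phi = F by rewrite mulmxDl -mulmxA mulmxV // mulmx1 -mulmxA.
set v := Phi *m e.
have q1 : qf (H - lam1^-1 *: invmx Y) u = S - lam1^-1 * qf (invmx Y) u.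
  by rewrite !qfE bilinDm bilinNm bilinZm -!qfE qf_invmx.
have q2 : bilin G u (- S *: v) = - S * a by rewrite bilinZr bilinMr GPhi /a bilinMr mul1mx.
have q3 : bilin G^T (- S *: v) u = - S * a by rewrite -bilin_tr q2.
have q4 : qf (lam0 *: H) (- S *: v) = lam0 * (S ^+ 2 * qf Phi e).
  by rewrite qfE bilinZm -qfE qfZ sqrrN qf_invmx.
have := lmi (col_mx u (- S *: v)); rewrite qf_block q1 q2 q3 q4 => hlmi.
have young := pd_young_inv u w (lam1 * S) pY; rewrite -/b in young.
have hw' : (lam1 * S) ^+ 2 * qf Y w <= (lam1 * S) ^+ 2 by rewrite ler_piMr ?sqr_ge0.
have he' : lam1 * (lam0 * (S ^+ 2 * qf Phi e)) <= lam1 * (lam0 * S ^+ 2).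
  apply: ler_wpM2l; first exact: ltW.
  by apply: ler_wpM2l => //; exact: ler_piMr (sqr_ge0 S) he.
have hlmi1 : 0 <= lam1 * S - qf (invmx Y) u - 2 * lam1 * S * a
                  + lam1 * (lam0 * (S ^+ 2 * qf Phi e)).
  by move: (mulr_ge0 (ltW lam1_gt0) hlmi); congr (_ <= _); field; rewrite gt_eqF.
have hab : lam1 * S * a + lam1 * S * b = lam1 * S ^+ 2 by rewrite Sab; ring.
have hl : lam1 * ((lam0 + lam1) * S ^+ 2) <= lam1 * S ^+ 2.
  by apply: ler_wpM2l; [exact: ltW | rewrite mulrC; exact: ler_piMr (sqr_ge0 S) lam01].
have S2_le_S : S ^+ 2 <= S.
  rewrite -(ler_pM2l lam1_gt0); lra.
nra.
Qed.

Lemma loewner_inv_margin n (P H : 'M[R]_n) : pd P -> pd H -> pd (invmx P - H) ->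
  exists2 eta, 0 < eta & forall e, qf (invmx H) e <= 1 -> qf P e <= 1 - eta.
Proof.
move=> pP pH pD.
have [mu mu0 hmu] := pd_coercive pD.
have [nu nu0 hnu] := pd_coercive (pd_inv pH).
have kap0 : 0 < mu * nu by rewrite mulr_gt0.
exists (mu * nu / (1 + mu * nu)); first by rewrite divr_gt0 //; lra.
move=> e he; apply: ler_one_sub_frac => //.
have uH := pd_unit pH; have S0 := (pd_psd pP).2 e.
set S := qf P e in S0 *; set g := P *m e.
have gE : bilin 1%:M g e = S by rewrite bilinMl mulmx1 pP.1.
have gD : qf (invmx P - H) g = S - qf H g.
  by rewrite qfE bilinDm bilinNm -!qfE /g -qf_invmx // mulKmx // pd_unit.
have SH : S ^+ 2 <= qf H g.
  have := psd_young g (invmx H *m e) S (pd_psd pH).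
  rewrite qf_invmx // bilinMr mulmxV // gE => young.
  have : S ^+ 2 * qf (invmx H) e <= S ^+ 2 by rewrite ler_piMr ?sqr_ge0.
  lra.
have Sg : nu * S ^+ 2 <= qf 1%:M g.
  have := psd_young g e (nu * S) (@psd1 R n); rewrite gE => young.
  have := ler_piMr (mulr_ge0 (ltW nu0) (sqr_ge0 S)) (le_trans (hnu e) he).
  lra.
have := hmu g; rewrite gD => hD.
have [S_le0|S_gt0] := lerP S 0; first nra.
rewrite -(ler_pM2l S_gt0) mulr1; nra.
Qed.

Lemma schur_margin n m (H : 'M[R]_n) (Psi : 'M[R]_(m, n)) (Q Qh : 'M[R]_m) :
  pd H -> Qh^T = Qh -> Qh *m Qh = Q ->
  pd (block_mx H (Psi^T *m Qh) (Qh *m Psi) 1%:M) ->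
  exists2 eta, 0 < eta & forall e, qf (invmx H) e <= 1 ->
    qf Q (Psi *m invmx H *m e) <= 1 - eta.
Proof.
move=> pH sQh QhQh lmi.
have [mu mu0 hmu] := pd_coercive lmi.
exists (mu / (1 + mu)); first by rewrite divr_gt0 //; lra.
move=> e he; apply: ler_one_sub_frac => //.
set v := invmx H *m e; set z := Qh *m (Psi *m v).
have zQ : qf Q (Psi *m invmx H *m e) = qf 1%:M z.
  by rewrite -mulmxA [RHS]qfE bilinMl bilinMr mulmx1 sQh QhQh.
have cross : bilin (Qh *m Psi) z v = qf 1%:M z.
  by rewrite qfE [RHS]bilinMr mul1mx [RHS]bilinMr.
have cross' : bilin (Psi^T *m Qh) v z = qf 1%:M z.
  by rewrite bilin_tr trmx_mul trmxK sQh; exact: cross.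
have := hmu (col_mx v (- z)).
rewrite (scalar_mx_block n m 1) !qf_block !bilin0m bilinNl bilinNr cross cross'.
rewrite !qfN qf_invmx // -zQ => hz.
have := qf1_ge0 v; nra.
Qed.

End EllipsoidalTube.

Section Measurability.
Context {R : realType} {d : measure_display} {T : measurableType d}.

Lemma measurable_qf_comp k (M : 'M[R]_k) (g : T -> 'cV[R]_k) :
  (forall i, measurable_fun setT (fun o => g o i 0)) ->
  measurable_fun setT (fun o => qf M (g o)).
Proof.
move=> mg; under eq_fun do rewrite qfE bilin_sum.
apply: measurable_sum => i; apply: measurable_sum => j.
by apply: measurable_funM; [apply: measurable_funM => //; exact: measurable_cst|].
Qed.

Lemma measurable_ellipsoid_comp k (M : 'M[R]_k) c (g : T -> 'cV[R]_k) :
  (forall i, measurable_fun setT (fun o => g o i 0)) ->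
  measurable [set o | ellipsoid M c (g o)].
Proof.
move=> mg; have mf : measurable_fun setT (fun o => qf M (g o - c)).
  apply: measurable_qf_comp => i; under eq_fun do rewrite !mxE.
  exact: measurable_funB (mg i) (measurable_cst _).
have := mf measurableT _ (measurable_itv `]-oo, 1]); rewrite setTI.
by congr measurable; apply/seteqP; split => o /=; rewrite in_itv.
Qed.

Lemma measurable_err_traj n N (F : 'M[R]_n) (w : nat -> T -> 'cV[R]_n) :
  (forall t, (t < N)%N -> forall i, measurable_fun setT (fun o => w t o i 0)) ->
  forall t, (t <= N)%N -> forall i,
    measurable_fun setT (fun o => err_traj F (w ^~ o) t i 0).
Proof.
move=> mw; elim=> [|t IHt] tN i /=.
  by under eq_fun do rewrite mxE; exact: measurable_cst.
under eq_fun do rewrite !mxE.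
apply: measurable_funD; last exact: mw.
apply: measurable_sum => j; apply: measurable_funM; first exact: measurable_cst.
exact: IHt (ltnW tN) j.
Qed.

Lemma measurable_forall (P : set nat) (F : nat -> set T) :
  (forall t, P t -> measurable (F t)) -> measurable [set o | forall t, P t -> F t o].
Proof.
move=> mF; rewrite (_ : [set o | _] = \bigcap_(t in P) F t).
  exact: bigcap_measurableType.
by apply/seteqP; split => o.
Qed.

End Measurability.

Theorem theorem2 (R : realType) (n m N : nat) (theta : R)
  (A : 'M[R]_n) (B : 'M[R]_(n, m))
  (p : nat -> 'cV[R]_n) (P : nat -> 'M[R]_n) (Q : 'M[R]_m) (Qh : 'M[R]_m)
  (Y : 'M[R]_n)
  (d : measure_display) (T : measurableType d) (Pr : probability T R)
  (w : nat -> T -> 'cV[R]_n)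
  (Phihat : 'M[R]_n) (Psi : 'M[R]_(m, n)) (lam0 lam1 : R) :
  (1 <= N)%N ->
  0 < theta < 1 ->
  (forall t, (1 <= t <= N)%N -> pd (P t)) ->
  pd Q ->
  (* Qh = Q^{1/2}, the symmetric positive definite square root of Q *)
  pd Qh -> Qh *m Qh = Q ->
  pd Y ->
  (* the disturbances w(0), ..., w(N-1) are random vectors *)
  (forall t, (t < N)%N -> forall i : 'I_n,
      measurable_fun setT (fun o => w t o i 0)) ->
  (Pr [set o | forall t, (t < N)%N -> ellipsoid Y 0 (w t o)] >= (1 - theta)%:E)%E ->
  (* feasibility of (Phihat, Psi, lam0, lam1) *)
  pd Phihat ->
  0 <= lam0 -> 0 <= lam1 -> 0 < lam1 -> 0 <= 1 - lam0 - lam1 ->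
  psd (block_mx (Phihat - lam1^-1 *: invmx Y) (A *m Phihat + B *m Psi)
                ((A *m Phihat + B *m Psi)^T) (lam0 *: Phihat)) ->
  pd (block_mx Phihat (Psi^T *m Qh) (Qh *m Psi) 1%:M) ->
  (forall t, (1 <= t <= N)%N -> pd (invmx (P t) - Phihat)) ->
  let Phi := invmx Phihat in
  let K := Psi *m Phi in
  let E := ellipsoid Phi 0 in
  let Eu := [set K *m e | e in E] in
  let U := ellipsoid Q 0 in
  let X := fun t => ellipsoid (P t) (p t) in
  let e0 := fun o => err_traj (A + B *m K) (w ^~ o) in
  [/\ (Pr [set o | forall t, (1 <= t <= N)%N -> E (e0 o t)] >= (1 - theta)%:E)%E,
      (forall t, (1 <= t <= N)%N -> interior (pdiff (X t) E) !=set0) &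
      interior (pdiff U Eu) !=set0].
Proof.
move=> _ _ pP pQ pQh QhQh pY mw hW pH lam0_ge0 _ lam1_gt0 lam01 lmi lmi_u pPH.
move=> Phi K E Eu U X e0; split.
- apply: le_trans hW (le_measure _ _ _ _); rewrite ?inE.
  + by apply: measurable_forall => t tN; apply: measurable_ellipsoid_comp; exact: mw.
  + apply: measurable_forall => t /andP[_ tN]; apply: measurable_ellipsoid_comp.
    exact: (measurable_err_traj _ mw).
  + move=> o Wo t /andP[_ tN]; apply: err_traj_stays Wo t tN.
      by rewrite /E /ellipsoid /= subr0 qf0.
    move=> x v; rewrite /E /ellipsoid /= !subr0 => Ex Wv.
    by apply: (ellipsoid_invariant pY pH lam0_ge0 lam1_gt0 _ lmi Ex Wv); lra.
- move=> t tN; have [eta eta0 heta] := loewner_inv_margin (pP t tN) pH (pPH t tN).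
  exists (p t); apply: interior_pdiff_ellipsoid (pd_psd (pP t tN)) eta0 _ => a.
  by rewrite /E /ellipsoid /= subr0; exact: heta.
- have [eta eta0 heta] := schur_margin pH pQh.1 QhQh lmi_u.
  exists 0; apply: interior_pdiff_ellipsoid (pd_psd pQ) eta0 _ => _ [e Ee <-].
  by apply: heta; move: Ee; rewrite /E /ellipsoid /= subr0.
Qed.
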